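(* Let $n$ be a positive integer and suppose there exist two mutually orthogonal latin squares of order $n$ that have a common transversal. Let $\rho$ be an integer with $1 \le \rho \le n$. Then there exists a $(3n+\rho,4)$-packing with exactly $n\rho + D(\rho,4)$ blocks in which the largest partial parallel class has size $\rho$.
   Context: For integers $v \ge k \ge 2$, a $(v,k)$-packing is a pair $(X,\mathcal{B})$ where $X$ is a set of $v$ points and $\mathcal{B}$ is a set of $k$-subsets of $X$ (blocks) such that every pair of distinct points lies in at most one block. For integers $m \ge 0$, $D(m,k)$ denotes the maximum number of $k$-subsets of an $m$-set such that every pair of points lies in at most one of them (so $D(m,k)=0$ if $m<k$). A partial parallel class (PPC) is a set of pairwise disjoint blocks; its size is the number of blocks. ''The largest PPC has size $\rho$'' means the packing has a PPC of size $\rho$ but none of size $\rho+1$. A transversal of a latin square of order $n$ is a set of $n$ cells, one in each row and each column, containing $n$ distinct symbols; a common transversal of several latin squares is a set of cells that is a transversal of each of them. *)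

From mathcomp Require Import all_boot all_order.
Set Implicit Arguments. Unset Strict Implicit. Unset Printing Implicit Defensive.

Definition is_packing (v k : nat) (B : {set {set 'I_v}}) : Prop :=
  (forall b, b \in B -> #|b| = k) /\
  (forall x y : 'I_v, x != y ->
     #|[set b in B | (x \in b) && (y \in b)]| <= 1).

Definition D (m k : nat) : nat :=
  \max_(B : {set {set 'I_m}} | [forall b in B, #|b| == k] &&
        [forall x : 'I_m, forall y : 'I_m,
           (x != y) ==> (#|[set b in B | (x \in b) && (y \in b)]| <= 1)])
     #|B|.

Definition is_PPC (v : nat) (B P : {set {set 'I_v}}) : Prop :=
  P \subset B /\
  (forall b1 b2, b1 \in P -> b2 \in P -> b1 != b2 -> [disjoint b1 & b2]).

Definition largest_PPC_size (v : nat) (B : {set {set 'I_v}}) (rho : nat) : Prop :=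
  (exists P, is_PPC B P /\ #|P| = rho) /\
  (forall P, is_PPC B P -> #|P| <= rho).

Definition latin_square (n : nat) (L : 'I_n -> 'I_n -> 'I_n) : Prop :=
  (forall i, injective (L i)) /\ (forall j, injective (fun i => L i j)).

Definition orthogonal (n : nat) (L1 L2 : 'I_n -> 'I_n -> 'I_n) : Prop :=
  injective (fun c : 'I_n * 'I_n => (L1 c.1 c.2, L2 c.1 c.2)).

Definition ls_transversal (n : nat) (L : 'I_n -> 'I_n -> 'I_n) (T : {set 'I_n * 'I_n}) : Prop :=
  #|T| = n /\
  {in T &, injective (fun c : 'I_n * 'I_n => c.1)} /\
  {in T &, injective (fun c : 'I_n * 'I_n => c.2)} /\
  {in T &, injective (fun c : 'I_n * 'I_n => L c.1 c.2)}.

From mathcomp Require Import all_boot all_order.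
From mathcomp Require Import zify.
Set Implicit Arguments. Unset Strict Implicit. Unset Printing Implicit Defensive.

(* Two orthogonal latin squares L1, L2 of order n give a transversal design
   TD(4,n): four groups of n points (rows, columns, symbols of L1, symbols of
   L2), and one block {i, j, L1 i j, L2 i j} per cell (i,j).  Two blocks share
   at most one point, since by orthogonality any two coordinates determine the
   cell.  Keep the n * rho cells whose L2-symbol is below rho and put a maximum
   (rho,4)-packing on the rho remaining points Y of the last group: a cell
   block meets Y in exactly one point, so the union is still a packing.  Every
   block meets Y, hence a partial parallel class has at most rho blocks, and
   the cells of the common transversal with L2-symbol below rho give rho
   pairwise disjoint blocks. *)

Section Packings.

Variable v : nat.
Implicit Types (k : nat) (B P : {set {set 'I_v}}) (Y : {set 'I_v}).

Lemma is_packingP k B :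
  is_packing k B <->
  (forall b, b \in B -> #|b| = k) /\
  {in B &, forall b b', 1 < #|b :&: b'| -> b = b'}.
Proof.
split=> [[Bk Bpairs] | [Bk Bmeet]]; split=> //.
  move=> b b' bB b'B /card_gt1P[x [y [/setIP[xb xb'] /setIP[yb yb'] xy]]].
  by apply: (card_le1_eqP (Bpairs x y xy)); rewrite inE ?bB ?b'B ?xb ?yb ?xb' ?yb'.
move=> x y xy; apply/card_le1_eqP => b b'.
rewrite !inE => /and3P[bB xb yb] /and3P[b'B xb' yb'].
by apply: Bmeet => //; apply/card_gt1P; exists x, y; rewrite !inE xb xb' yb yb'.
Qed.

Lemma is_packing_setU k B1 B2 :
  is_packing k B1 -> is_packing k B2 ->
  {in B1 & B2, forall b1 b2, #|b1 :&: b2| <= 1} ->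
  is_packing k (B1 :|: B2).
Proof.
move=> /is_packingP[B1k B1meet] /is_packingP[B2k B2meet] B12.
apply/is_packingP; split=> [b /setUP[/B1k | /B2k] // | b b'].
move=> /setUP[bB1 | bB2] /setUP[b'B1 | b'B2] meet; first exact: B1meet.
- by move: (B12 b b' bB1 b'B2); rewrite leqNgt meet.
- by move: (B12 b' b b'B1 bB2); rewrite setIC leqNgt meet.
exact: B2meet.
Qed.

Lemma card_packing_setU k B1 B2 :
  1 < k -> is_packing k B1 ->
  {in B1 & B2, forall b1 b2, #|b1 :&: b2| <= 1} ->
  #|B1 :|: B2| = #|B1| + #|B2|.
Proof.
move=> k_gt1 [B1k _] B12; rewrite cardsU.
suff -> : B1 :&: B2 = set0 by rewrite cards0 subn0.
apply/setP => b; rewrite !inE; apply/negP => /andP[bB1 bB2].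
by move: (B12 b b bB1 bB2); rewrite setIid B1k // leqNgt k_gt1.
Qed.

Lemma PPC_card_le B P Y :
  (forall b, b \in B -> exists2 y, y \in Y & y \in b) ->
  is_PPC B P -> #|P| <= #|Y|.
Proof.
move=> BY [/subsetP PB Pdisj].
have [-> | [b0 b0P]] := set_0Vmem P; first by rewrite cards0.
have [y0 _ _] := BY b0 (PB b0 b0P).
pose rep b := odflt y0 [pick y in Y :&: b].
have repP b : b \in P -> rep b \in Y :&: b.
  move=> /PB /BY[y yY yb]; rewrite /rep; case: pickP => [// | none].
  by move: (none y); rewrite inE yY yb.
rewrite -(card_in_imset (f := rep)).
  apply: subset_leq_card; apply/subsetP => _ /imsetP[b bP ->].
  by case/setIP: (repP b bP).
move=> b b' bP b'P same; apply/eqP; apply: contraT => neq.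
have /setIP[_ rep_b] := repP b bP; have /setIP[_ rep_b'] := repP b' b'P.
by rewrite -same (disjointFr (Pdisj b b' bP b'P neq) rep_b) in rep_b'.
Qed.

End Packings.

Lemma is_packing_imset m v k (f : 'I_m -> 'I_v) (B : {set {set 'I_m}}) :
  injective f -> is_packing k B -> is_packing k [set f @: b | b : {set 'I_m} in B].
Proof.
move=> f_inj /is_packingP[Bk Bmeet]; apply/is_packingP; split.
  by move=> _ /imsetP[b bB ->]; rewrite card_imset // Bk.
move=> _ _ /imsetP[b bB ->] /imsetP[b' b'B ->].
rewrite -imsetI; last by move=> x y _ _; apply: f_inj.
by rewrite card_imset // => /Bmeet-> .
Qed.

Lemma exists_packing_card_D m k :
  exists2 B : {set {set 'I_m}}, is_packing k B & #|B| = D m k.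
Proof.
pose packb (B : {set {set 'I_m}}) := [forall b in B, #|b| == k] &&
  [forall x : 'I_m, forall y : 'I_m,
     (x != y) ==> (#|[set b in B | (x \in b) && (y \in b)]| <= 1)].
have packbP B : packb B -> is_packing k B.
  case/andP=> /forall_inP Bk /forallP Bpairs; split=> [b /Bk/eqP // | x y xy].
  exact: implyP (forallP (Bpairs x) y) xy.
have packb0 : packb set0.
  apply/andP; split; apply/forallP => x; first by rewrite inE.
  apply/forallP => y; apply/implyP => _.
  suff -> : [set b in set0 : {set {set 'I_m}} | (x \in b) && (y \in b)] = set0
    by rewrite cards0.
  by apply/setP => b; rewrite !inE.
have [B BP maxB] : {B | B \in packb & \max_(B' in packb) #|B'| = #|B|}.
  by apply: eq_bigmax_cond; apply/card_gt0P; exists set0.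
by exists B; [exact: packbP | rewrite /D -maxB].
Qed.

Lemma card_ord_lt n m : m <= n -> #|[set i : 'I_n | i < m]| = m.
Proof.
move=> mn; have widen_inj : injective (widen_ord mn).
  by move=> i j [] /val_inj.
suff -> : [set i : 'I_n | i < m] = widen_ord mn @: 'I_m.
  by rewrite card_imset // card_ord.
apply/setP => i; rewrite inE; apply/idP/imsetP => [im | [j _ ->]]; last exact: (ltn_ord j).
by exists (Ordinal im) => //; apply: val_inj.
Qed.

Lemma card_cells_sym_in n (L : 'I_n -> 'I_n -> 'I_n) (A : {set 'I_n}) :
  (forall i, injective (L i)) ->
  #|[set c : 'I_n * 'I_n | L c.1 c.2 \in A]| = n * #|A|.
Proof.
move=> Lrow; pose shear c := (c.1, L c.1 c.2 : 'I_n).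
have shear_inj : injective shear by move=> [i j] [i' j'] [/= <- /Lrow ->].
transitivity #|setX [set: 'I_n] A|; last by rewrite cardsX cardsT card_ord.
rewrite -[RHS](card_preimset _ shear_inj).
by apply: eq_card => c; rewrite !inE.
Qed.

Lemma card_transversal_sym_in n (L : 'I_n -> 'I_n -> 'I_n) T (A : {set 'I_n}) :
  ls_transversal L T -> #|[set c in T | L c.1 c.2 \in A]| = #|A|.
Proof.
move=> [Tn [_ [_ symT_inj]]].
have symT : [set L c.1 c.2 | c in T] = setT.
  by apply/eqP; rewrite eqEcard subsetT (card_in_imset symT_inj) Tn cardsT card_ord leqnn.
rewrite -(@card_in_imset _ _ (fun c => L c.1 c.2) [set c in T | L c.1 c.2 \in A]).
  apply: eq_card => s; apply/imsetP/idP => [[c] | sA].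
    by rewrite inE => /andP[_ cA] ->.
  have : s \in [set L c.1 c.2 | c in T] by rewrite symT inE.
  by case/imsetP => c cT s_def; exists c; rewrite // inE cT -s_def.
by move=> c c'; rewrite !inE => /andP[cT _] /andP[c'T _]; apply: symT_inj.
Qed.

Lemma mulnD_small_inj n k k' s s' :
  s < n -> s' < n -> k * n + s = k' * n + s' -> k = k' /\ s = s'.
Proof.
move=> sn s'n e; have n_gt0 : 0 < n := leq_ltn_trans (leq0n s) sn.
split; first by have := congr1 (divn^~ n) e; rewrite !divnMDl // !divn_small // !addn0.
by have := congr1 (modn^~ n) e; rewrite !modnMDl !modn_small.
Qed.

Section CellBlocks.

Variables (n rho : nat) (L1 L2 : 'I_n -> 'I_n -> 'I_n).
Hypotheses (L1latin : latin_square L1) (L2latin : latin_square L2).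
Hypothesis L12orth : orthogonal L1 L2.
Hypotheses (rho_gt0 : 0 < rho) (rho_le_n : rho <= n).

Definition cell_coord (c : 'I_n * 'I_n) (k : 'I_4) : 'I_n :=
  match nat_of_ord k with 0 => c.1 | 1 => c.2 | 2 => L1 c.1 c.2 | _ => L2 c.1 c.2 end.

Lemma cell_coord_inj k l :
  k != l -> injective (fun c => (cell_coord c k, cell_coord c l)).
Proof.
case: L1latin L2latin => [L1row L1col] [L2row L2col].
wlog lt_kl : k l / k < l.
  move=> wlog_kl; case: (ltngtP k l) => [lt_kl | lt_lk | /val_inj ->]; last by rewrite eqxx.
  - exact: wlog_kl.
  - move=> _ c c' [e1 e2]; apply: (wlog_kl l k) => //; first by rewrite neq_ltn lt_lk.
    by rewrite /= e1 e2.
(* [//] also closes the case of the two symbol coordinates: it is [L12orth]. *)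
move: k l lt_kl => [[|[|[|[|//]]]] ?] [[|[|[|[|//]]]] ?] //= _ _ [i j] [i' j'] [];
  rewrite /cell_coord /= => e1 e2.
- by rewrite e1 e2.
- by move: e2; rewrite -e1 => /L1row->.
- by move: e2; rewrite -e1 => /L2row->.
- by move: e2; rewrite -e1 => /L1col->.
- by move: e2; rewrite -e1 => /L2col->.
Qed.

(* Point [s] of group [k] is the ordinal [k * n + s]; [insubd] gives a junk
   point when this is out of range, i.e. for the deleted symbols [s >= rho] of
   the last group, which no block uses. *)
Definition point (k s : nat) : 'I_(3 * n + rho) :=
  insubd (Ordinal (ltn_addl (3 * n) rho_gt0)) (k * n + s).

Lemma val_point k s : k * n + s < 3 * n + rho -> val (point k s) = k * n + s.
Proof. by rewrite /point val_insubd => ->. Qed.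

Lemma point_inj k k' s s' :
  k * n + s < 3 * n + rho -> k' * n + s' < 3 * n + rho -> s < n -> s' < n ->
  point k s = point k' s' -> k = k' /\ s = s'.
Proof.
by move=> ks_lt k's'_lt sn s'n /(congr1 val); rewrite !val_point //; apply: mulnD_small_inj.
Qed.

Definition cells := [set c : 'I_n * 'I_n | L2 c.1 c.2 < rho].

Definition cell_block c : {set 'I_(3 * n + rho)} :=
  [set point k (cell_coord c k) | k : 'I_4].

Lemma cell_point_bound c (k : 'I_4) :
  c \in cells -> k * n + cell_coord c k < 3 * n + rho.
Proof.
rewrite inE => small; have := ltn_ord (cell_coord c k).
by case: k => [[|[|[|[|//]]]] ?]; rewrite /cell_coord /= => ?; lia.
Qed.

Lemma cell_block_point c c' (k k' : 'I_4) :
  c \in cells -> c' \in cells ->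
  point k (cell_coord c k) = point k' (cell_coord c' k') ->
  k = k' /\ cell_coord c k = cell_coord c' k'.
Proof.
move=> cS c'S /point_inj[]; rewrite ?cell_point_bound //.
by move=> /val_inj kk' /val_inj e; split.
Qed.

Lemma card_cell_block c : c \in cells -> #|cell_block c| = 4.
Proof.
by move=> cS; rewrite card_imset ?card_ord // => k k' /(cell_block_point cS cS)[].
Qed.

Lemma cell_blocks_meet c c' :
  c \in cells -> c' \in cells -> 1 < #|cell_block c :&: cell_block c'| -> c = c'.
Proof.
move=> cS c'S /card_gt1P[_ [_ [/setIP[/imsetP[k _ ->] /imsetP[k' _ ek]]
  /setIP[/imsetP[l _ ->] /imsetP[l' _ el]] neq]]].
case/(cell_block_point cS c'S): ek => <- {k'} ek.
case/(cell_block_point cS c'S): el => <- {l'} el.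
have kl : k != l by apply: contraNneq neq => ->.
by apply: (cell_coord_inj kl); rewrite /= ek el.
Qed.

Lemma cell_block_inj : {in cells &, injective cell_block}.
Proof.
by move=> c c' cS c'S e; apply: cell_blocks_meet; rewrite // e setIid card_cell_block.
Qed.

Lemma is_packing_cell_blocks : is_packing 4 (cell_block @: cells).
Proof.
apply/is_packingP; split=> [_ /imsetP[c cS ->] | _ _ /imsetP[c cS ->] /imsetP[c' c'S ->]].
  exact: card_cell_block.
by move/(cell_blocks_meet cS c'S)->.
Qed.

Lemma card_cell_blocks : #|cell_block @: cells| = n * rho.
Proof.
rewrite (card_in_imset cell_block_inj) -(card_ord_lt rho_le_n).
by rewrite -(card_cells_sym_in _ L2latin.1); apply: eq_card => c; rewrite !inE.
Qed.

Definition last_point (s : 'I_rho) := point 3 s.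

Definition last_group := last_point @: [set: 'I_rho].

Lemma last_point_bound (s : 'I_rho) : 3 * n + s < 3 * n + rho.
Proof. by rewrite ltn_add2l. Qed.

Lemma last_point_small (s : 'I_rho) : s < n.
Proof. exact: leq_trans (ltn_ord s) rho_le_n. Qed.

Lemma last_point_inj : injective last_point.
Proof.
move=> s s' /point_inj[]; rewrite ?last_point_bound ?last_point_small //.
by move=> _ /val_inj.
Qed.

Lemma card_last_group : #|last_group| = rho.
Proof. by rewrite card_imset ?cardsT ?card_ord //; apply: last_point_inj. Qed.

Lemma cell_block_meets_last_group c :
  c \in cells -> exists2 y, y \in last_group & y \in cell_block c.
Proof.
rewrite inE => small; exists (last_point (Ordinal small)); first exact: imset_f.
by apply/imsetP; exists ord_max.
Qed.

Lemma cell_block_meet_last_group c (b : {set 'I_(3 * n + rho)}) :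
  c \in cells -> b \subset last_group -> #|cell_block c :&: b| <= 1.
Proof.
move=> cS /subsetP bY.
suff onlyY z : z \in cell_block c -> z \in last_group -> z = point 3 (L2 c.1 c.2).
  by apply/card_le1_eqP => x y /setIP[/onlyY xY /bY/xY->] /setIP[/onlyY yY /bY/yY->].
move=> /imsetP[k _ ->] /imsetP[s _ /point_inj[]].
all: rewrite ?cell_point_bound ?last_point_bound ?last_point_small //.
by rewrite /cell_coord => ->.
Qed.

Section LastBlocks.

Variable B0 : {set {set 'I_rho}}.
Hypothesis B0packing : is_packing 4 B0.

Definition last_blocks := [set last_point @: b | b : {set 'I_rho} in B0].

Definition mols_packing := cell_block @: cells :|: last_blocks.

Lemma last_block_sub b : b \in last_blocks -> b \subset last_group.
Proof. by case/imsetP=> b0 _ ->; apply: imsetS; apply: subsetT. Qed.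

Lemma cell_last_blocks_meet :
  {in cell_block @: cells & last_blocks, forall b1 b2, #|b1 :&: b2| <= 1}.
Proof.
move=> _ b /imsetP[c cS ->] /last_block_sub; exact: cell_block_meet_last_group.
Qed.

Lemma is_packing_mols_packing : is_packing 4 mols_packing.
Proof.
apply: is_packing_setU cell_last_blocks_meet; first exact: is_packing_cell_blocks.
exact: is_packing_imset last_point_inj B0packing.
Qed.

Lemma card_mols_packing : #|mols_packing| = n * rho + #|B0|.
Proof.
rewrite (card_packing_setU _ is_packing_cell_blocks cell_last_blocks_meet) //.
by rewrite card_cell_blocks card_imset //; apply/imset_inj/last_point_inj.
Qed.

Lemma mols_packing_block_meets_last_group b :
  b \in mols_packing -> exists2 y, y \in last_group & y \in b.
Proof.
case/setUP=> [/imsetP[c cS ->] | /imsetP[b0 b0B0 ->]].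
  exact: cell_block_meets_last_group.
have /card_gt0P[s sb0] : 0 < #|b0| by rewrite B0packing.1.
by exists (last_point s); apply: imset_f.
Qed.

Lemma PPC_mols_packing_card_le P : is_PPC mols_packing P -> #|P| <= rho.
Proof.
move=> PPC; rewrite -[leqRHS]card_last_group.
exact: PPC_card_le mols_packing_block_meets_last_group PPC.
Qed.

Section CommonTransversal.

Variable T : {set 'I_n * 'I_n}.
Hypotheses (T1 : ls_transversal L1 T) (T2 : ls_transversal L2 T).

Lemma transversal_coord_inj (k : 'I_4) : {in T &, injective (cell_coord ^~ k)}.
Proof.
case: T1 T2 => [_ [rowT [colT sym1T]]] [_ [_ [_ sym2T]]].
by case: k => [[|[|[|[|//]]]] ?]; rewrite /cell_coord.
Qed.

Lemma transversal_cell_blocks_disjoint c c' :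
  c \in T :&: cells -> c' \in T :&: cells -> c != c' ->
  [disjoint cell_block c & cell_block c'].
Proof.
move=> /setIP[cT cS] /setIP[c'T c'S]; rewrite -setI_eq0; apply: contraTT.
case/set0Pn=> _ /setIP[/imsetP[k _ ->] /imsetP[k' _ /(cell_block_point cS c'S)[<- e]]].
by rewrite negbK; apply/eqP; exact: (transversal_coord_inj cT c'T e).
Qed.

Lemma transversal_PPC : is_PPC mols_packing (cell_block @: (T :&: cells)).
Proof.
split; first by apply: subsetU; apply/orP; left; apply: imsetS; apply: subsetIr.
move=> _ _ /imsetP[c cTS ->] /imsetP[c' c'TS ->] neq.
by apply: transversal_cell_blocks_disjoint => //; apply: contraNneq neq => ->.
Qed.

Lemma card_transversal_PPC : #|cell_block @: (T :&: cells)| = rho.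
Proof.
rewrite card_in_imset; last by move=> c c' /setIP[_ cS] /setIP[_ c'S]; apply: cell_block_inj.
rewrite -(card_ord_lt rho_le_n) -(card_transversal_sym_in _ T2).
by apply: eq_card => c; rewrite !inE.
Qed.

End CommonTransversal.

End LastBlocks.

End CellBlocks.

Theorem theorem2p4 (n rho : nat) :
  0 < n ->
  (exists L1 L2 : 'I_n -> 'I_n -> 'I_n,
      latin_square L1 /\ latin_square L2 /\ orthogonal L1 L2 /\
      exists T : {set 'I_n * 'I_n}, ls_transversal L1 T /\ ls_transversal L2 T) ->
  1 <= rho <= n ->
  exists B : {set {set 'I_(3 * n + rho)}},
    is_packing 4 B /\ #|B| = n * rho + D rho 4 /\ largest_PPC_size B rho.
Proof.
move=> _ [L1 [L2 [L1latin [L2latin [L12orth [T [T1 T2]]]]]]] /andP[rho_gt0 rho_le_n].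
have [B0 B0packing <-] := exists_packing_card_D rho 4.
exists (mols_packing L1 L2 rho_gt0 B0); split; last split.
- exact: is_packing_mols_packing.
- exact: card_mols_packing.
split; last exact: PPC_mols_packing_card_le.
exists (cell_block L1 L2 rho_gt0 @: (T :&: cells rho L2)).
by split; [apply: transversal_PPC | apply: card_transversal_PPC].
Qed.
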